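(* Consider $n$ agents over a fixed undirected connected graph with symmetric nonnegative weights $a_{ij}$ ($a_{ij}>0$ iff $i,j$ are neighbors). Assume the CFP solution set $\mathbf{X}^*$ is non-empty and there is $K\ge0$ with $\|\nabla g_i^+(x)\|\le K$ for all $x$ and $i$. Let $\{\alpha(t)\},\{\beta(t)\}$ satisfy (a) $\alpha(t)\in[0,1]$, $\sum_t\alpha(t)=\infty$, $\sum_t\alpha^2(t)<\infty$; (b) $\beta(t)\ge0$, $\sum_t\beta(t)=\infty$, $\sum_t\beta^2(t)<\infty$. Let $0<h<\frac{1}{\max_{1\le i\le n}\sum_{j=1}^n a_{ij}}$. The states $x_i(t)\in\mathbb{R}^m$ evolve by $x_i(t+1)=x_i(t)+u_i(t)$ with $$y_i(t)=x_i(t)+h\sum_{j\in N_i}a_{ij}(x_j(t)-x_i(t)),\ \nabla_i(t)=\beta(t)\nabla g_i^+(y_i(t)),\ \xi_i(t)=y_i(t)-\nabla_i(t),$$ $$\varphi_i(t)=\alpha(t)\big(\xi_i(t)-P_{X_i}(\xi_i(t))\big),\ u_i(t)=h\sum_{j\in N_i}a_{ij}(x_j(t)-x_i(t))-\nabla_i(t)-\varphi_i(t).$$ Then the agents reach consensus asymptotically and there is $x^*\in\mathbf{X}^*$ with $\lim_{t\to\infty}x_i(t)=x^*$ for all $i$.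
   Context: For each $i$, $g_i:\mathbb{R}^m\to\mathbb{R}$ convex continuous, $X_i\subset\mathbb{R}^m$ closed convex, $X=\bigcap_iX_i$; the CFP asks for $x$ with $g_i(x)\le0$ for all $i$ and $x\in X$, with solution set $\mathbf{X}^*$. $g_i^+=\max[g_i,0]$; $\nabla g_i^+(y)$ a subgradient of $g_i^+$ at $y$ (chosen as $0$ if $g_i(y)\le0$ and as a subgradient of $g_i$ otherwise); $P_{X_i}$ Euclidean projection onto $X_i$. Consensus means $\|x_i(t)-x_j(t)\|\to0$ for all $i,j$. *)

From HB Require Import structures.
From mathcomp Require Import all_boot all_order all_algebra.
From mathcomp Require Import all_classical all_reals all_analysis.
Set Implicit Arguments. Unset Strict Implicit. Unset Printing Implicit Defensive.
Import Order.TTheory GRing.Theory Num.Theory.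
Import numFieldNormedType.Exports.
Local Open Scope classical_set_scope.
Local Open Scope ring_scope.

Section CFP.
Variable R : realType.
Variable m : nat.
Notation vec := 'rV[R]_m.

Definition dotv (u v : vec) : R := \sum_(k < m) u ord0 k * v ord0 k.
Definition norm2 (u : vec) : R := Num.sqrt (dotv u u).

Definition convex_fun (f : vec -> R) : Prop :=
  forall x y (l : R), 0 <= l <= 1 ->
    f (l *: x + (1 - l) *: y) <= l * f x + (1 - l) * f y.

Definition is_projection (C : set vec) (P : vec -> vec) : Prop :=
  forall x, C (P x) /\ forall z, C z -> norm2 (x - P x) <= norm2 (x - z).

Definition is_subgradient (f : vec -> R) (y d : vec) : Prop :=
  forall z, f y + dotv d (z - y) <= f z.

(* G y is the chosen subgradient of g^+ = max(g,0) at y: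
   0 if g y <= 0, a subgradient of g otherwise *)
Definition is_plus_subgradient_sel (g : vec -> R) (G : vec -> vec) : Prop :=
  forall y, (g y <= 0 -> G y = 0) /\ (0 < g y -> is_subgradient g y (G y)).

End CFP.

Definition adj (R : realType) (n : nat) (a : 'I_n -> 'I_n -> R) : rel 'I_n :=
  fun i j => (i != j) && (0 < a i j).

Definition graph_connected (R : realType) (n : nat) (a : 'I_n -> 'I_n -> R) :=
  forall i j : 'I_n, connect (adj a) i j.

Definition cons_term (R : realType) (n m : nat) (a : 'I_n -> 'I_n -> R) (h : R)
  (z : 'I_n -> 'rV[R]_m) (i : 'I_n) : 'rV[R]_m :=
  h *: \sum_(j < n | adj a i j) a i j *: (z j - z i).

Definition control (R : realType) (n m : nat) (a : 'I_n -> 'I_n -> R) (h : R)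
  (G : 'I_n -> 'rV[R]_m -> 'rV[R]_m) (P : 'I_n -> 'rV[R]_m -> 'rV[R]_m)
  (al be : R) (z : 'I_n -> 'rV[R]_m) (i : 'I_n) : 'rV[R]_m :=
  let y := z i + cons_term a h z i in
  let nab := be *: G i y in
  let xi := y - nab in
  let phi := al *: (xi - P i xi) in
  cons_term a h z i - nab - phi.

From HB Require Import structures.
From mathcomp Require Import all_boot all_order all_algebra.
From mathcomp Require Import all_classical all_reals all_analysis.
From mathcomp Require Import ring lra.
Import Order.TTheory GRing.Theory Num.Theory.
Import numFieldNormedType.Exports.
Local Open Scope classical_set_scope.
Local Open Scope ring_scope.

(* For every feasible z, V_z(t) = sum_i |x_i(t) - z|^2 drops at each step by the
   disagreement removed by the consensus step, by 2 beta(t) g_i^+(y_i(t)) and by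
   alpha(t) |xi_i(t) - P_i xi_i(t)|^2, up to an error n K^2 beta(t)^2; hence all
   these drops are summable. Summable disagreement along the edges of a
   connected graph gives consensus. The average xbar(t) then moves by
   O(alpha(t) + beta(t)) per step; since sum beta and sum alpha diverge while
   sum beta g_i^+ and sum alpha dist^2 converge, the infeasibility of xbar(t)
   cannot stay away from zero (a crossing argument). A cluster point x* of xbar
   at such times is feasible, so V_x* is quasi-nonincreasing and small
   infinitely often, hence tends to zero. *)

Section Euclid.
Context {R : realType} {m : nat}.
Local Notation vec := 'rV[R]_m.
Implicit Types (u v w : vec) (c : R).

Definition sqnorm u := dotv u u.

Lemma dotvC u v : dotv u v = dotv v u.
Proof. by apply: eq_bigr => k _; rewrite mulrC. Qed.

Lemma dotvDl u v w : dotv (u + v) w = dotv u w + dotv v w.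
Proof. by rewrite /dotv -big_split; apply: eq_bigr => k _; rewrite mxE mulrDl. Qed.

Lemma dotvDr u v w : dotv w (u + v) = dotv w u + dotv w v.
Proof. by rewrite !(dotvC w) dotvDl. Qed.

Lemma dotvZl c u v : dotv (c *: u) v = c * dotv u v.
Proof. by rewrite /dotv mulr_sumr; apply: eq_bigr => k _; rewrite mxE mulrA. Qed.

Lemma dotvZr c u v : dotv v (c *: u) = c * dotv v u.
Proof. by rewrite !(dotvC v) dotvZl. Qed.

Lemma dotvNl u v : dotv (- u) v = - dotv u v.
Proof. by rewrite -scaleN1r dotvZl mulN1r. Qed.

Lemma dotvNr u v : dotv v (- u) = - dotv v u.
Proof. by rewrite !(dotvC v) dotvNl. Qed.

Lemma dotvBl u v w : dotv (u - v) w = dotv u w - dotv v w.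
Proof. by rewrite dotvDl dotvNl. Qed.

Lemma dotvBr u v w : dotv w (u - v) = dotv w u - dotv w v.
Proof. by rewrite dotvDr dotvNr. Qed.

Lemma dotv0l v : dotv 0 v = 0.
Proof. by rewrite -(scale0r 0) dotvZl mul0r. Qed.

Lemma dotv_suml (I : Type) (r : seq I) (P : pred I) (f : I -> vec) v :
  dotv (\sum_(i <- r | P i) f i) v = \sum_(i <- r | P i) dotv (f i) v.
Proof. exact: (big_morph (fun u => dotv u v) (fun u w => dotvDl u w v) (dotv0l v)). Qed.

Lemma sqnorm_ge0 u : 0 <= sqnorm u.
Proof. by apply: sumr_ge0 => k _; rewrite -expr2 sqr_ge0. Qed.

Lemma sqnorm_eq0 u : (sqnorm u == 0) = (u == 0).
Proof.
apply/idP/eqP => [|->]; last by rewrite /sqnorm dotv0l.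
rewrite psumr_eq0 => [/allP u0|k _]; last by rewrite -expr2 sqr_ge0.
apply/rowP => k; rewrite mxE.
by have /= := u0 k (mem_index_enum k); rewrite mulf_eq0 orbb => /eqP.
Qed.

Lemma sqnorm0 : sqnorm (0 : vec) = 0.
Proof. by apply/eqP; rewrite sqnorm_eq0. Qed.

Lemma sqnormB u v : sqnorm (u - v) = sqnorm u - 2 * dotv u v + sqnorm v.
Proof. by rewrite /sqnorm !dotvBl !dotvBr (dotvC v u); ring. Qed.

Lemma sqnormD u v : sqnorm (u + v) = sqnorm u + 2 * dotv u v + sqnorm v.
Proof. by rewrite -[v]opprK sqnormB dotvNr /sqnorm dotvNl dotvNr opprK; ring. Qed.

Lemma sqnormZ c u : sqnorm (c *: u) = c ^+ 2 * sqnorm u.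
Proof. by rewrite /sqnorm dotvZl dotvZr mulrA expr2. Qed.

Lemma sqnorm_distC u v : sqnorm (u - v) = sqnorm (v - u).
Proof. by rewrite !sqnormB (dotvC v u); ring. Qed.

Lemma sqnormD_le u v : sqnorm (u + v) <= 2 * sqnorm u + 2 * sqnorm v.
Proof. by rewrite sqnormD; have := sqnorm_ge0 (u - v); rewrite sqnormB; lra. Qed.

Lemma norm2_ge0 u : 0 <= norm2 u.
Proof. exact: sqrtr_ge0. Qed.

Lemma sqr_norm2 u : norm2 u ^+ 2 = sqnorm u.
Proof. by rewrite sqr_sqrtr // sqnorm_ge0. Qed.

Lemma norm2_le_sqr u c : 0 <= c -> (norm2 u <= c) = (sqnorm u <= c ^+ 2).
Proof. by move=> c0; rewrite -ler_sqr ?nnegrE ?norm2_ge0 // sqr_norm2. Qed.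

Lemma norm2_lt_sqr u c : 0 <= c -> (norm2 u < c) = (sqnorm u < c ^+ 2).
Proof. by move=> c0; rewrite -ltr_sqr ?nnegrE ?norm2_ge0 // sqr_norm2. Qed.

Lemma norm2_eq0 u : (norm2 u == 0) = (u == 0).
Proof. by rewrite sqrtr_eq0 le_eqVlt ltNge sqnorm_ge0 orbF sqnorm_eq0. Qed.

Lemma cauchy_schwarz u v : dotv u v <= norm2 u * norm2 v.
Proof.
suff : dotv u v ^+ 2 <= sqnorm u * sqnorm v.
  move=> uv; apply: le_trans (ler_norm _) _.
  rewrite -ler_sqr ?nnegrE ?mulr_ge0 ?norm2_ge0 //.
  by rewrite real_normK ?num_real // exprMn !sqr_norm2.
have [v0|v_neq0] := eqVneq v 0.
  by rewrite v0 sqnorm0 dotvC dotv0l expr0n mulr0.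
have vpos : 0 < sqnorm v by rewrite lt_neqAle eq_sym sqnorm_eq0 v_neq0 sqnorm_ge0.
(* evaluate the nonnegative quadratic [s |-> sqnorm (u - s v)] at its minimiser *)
have := sqnorm_ge0 (u - (dotv u v / sqnorm v) *: v).
rewrite sqnormB sqnormZ dotvZr -(ler_pM2r vpos) mul0r.
have -> : (sqnorm u - 2 * (dotv u v / sqnorm v * dotv u v)
           + (dotv u v / sqnorm v) ^+ 2 * sqnorm v) * sqnorm v
          = sqnorm u * sqnorm v - dotv u v ^+ 2 by field; rewrite gt_eqF.
by rewrite subr_ge0.
Qed.

Lemma norm2D u v : norm2 (u + v) <= norm2 u + norm2 v.
Proof.
rewrite norm2_le_sqr ?addr_ge0 ?norm2_ge0 // sqnormD sqrrD !sqr_norm2.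
by have := cauchy_schwarz u v; lra.
Qed.

Lemma norm2Z c u : norm2 (c *: u) = `|c| * norm2 u.
Proof. by rewrite /norm2 -/(sqnorm _) sqnormZ sqrtrM ?sqr_ge0 // sqrtr_sqr. Qed.

Lemma norm2N u : norm2 (- u) = norm2 u.
Proof. by rewrite -scaleN1r norm2Z normrN1 mul1r. Qed.

Lemma norm2_distC u v : norm2 (u - v) = norm2 (v - u).
Proof. by rewrite -norm2N opprB. Qed.

Lemma norm2_dist_le u v w : norm2 (u - w) <= norm2 (u - v) + norm2 (v - w).
Proof. by have := norm2D (u - v) (v - w); rewrite addrA subrK. Qed.

Lemma norm20 : norm2 (0 : vec) = 0.
Proof. by rewrite /norm2 -/(sqnorm 0) sqnorm0 sqrtr0. Qed.

Lemma norm2_sum (I : Type) (r : seq I) (P : pred I) (f : I -> vec) :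
  norm2 (\sum_(i <- r | P i) f i) <= \sum_(i <- r | P i) norm2 (f i).
Proof.
elim/big_rec2: _ => [|i y1 y2 _ IH]; first by rewrite norm20.
exact: le_trans (norm2D _ _) (lerD (lexx _) IH).
Qed.

Lemma abs_coord_le_mx_norm u k : `|u ord0 k| <= `|u|.
Proof.
by rewrite [`|u|]mx_normrE (le_bigmax _ (fun ij : 'I_1 * 'I_m => `|u ij.1 ij.2|) (ord0, k)).
Qed.

Lemma mx_norm_le_norm2 u : `|u| <= norm2 u.
Proof.
rewrite [`|u|]mx_normrE; apply: bigmax_le => [|[i k] _]; first exact: norm2_ge0.
rewrite (ord1 i) -sqrtr_sqr ler_sqrt ?sqnorm_ge0 // /sqnorm /dotv.
by rewrite (bigD1 k) //= -expr2 lerDl; apply: sumr_ge0 => j _; rewrite -expr2 sqr_ge0.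
Qed.

Lemma norm2_le_mx_norm u : norm2 u <= Num.sqrt m%:R * `|u|.
Proof.
rewrite norm2_le_sqr ?mulr_ge0 ?sqrtr_ge0 // exprMn sqr_sqrtr ?ler0n //.
rewrite -[X in X%:R](card_ord m) mulr_natl -sumr_const ler_sum // => k _.
by rewrite -expr2 -real_normK ?num_real // lerXn2r ?nnegrE ?abs_coord_le_mx_norm.
Qed.

Definition mean {n} (f : 'I_n -> vec) := n%:R^-1 *: \sum_(j < n) f j.

Lemma sub_meanE {n} (f : 'I_n -> vec) v : (0 < n)%N ->
  v - mean f = mean (fun j => v - f j).
Proof.
move=> n_gt0; rewrite /mean sumrB sumr_const card_ord scalerBr -[v *+ n]scaler_nat.
by rewrite scalerA mulVf ?scale1r // pnatr_eq0 -lt0n.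
Qed.

Lemma mean_norm2_le {n} (f : 'I_n -> vec) c : (0 < n)%N ->
  (forall j, norm2 (f j) <= c) -> norm2 (mean f) <= c.
Proof.
move=> n_gt0 fc; rewrite /mean norm2Z ger0_norm ?invr_ge0 ?ler0n //.
rewrite ler_pdivrMl ?ltr0n // (_ : n%:R * c = \sum_(j < n) c); last first.
  by rewrite sumr_const card_ord mulr_natl.
exact: le_trans (norm2_sum _ _ _ _) (ler_sum _ (fun j _ => fc j)).
Qed.

Lemma norm2_cvg0 (f : nat -> vec) :
  sqnorm (f t) @[t --> \oo] --> 0 -> norm2 (f t) @[t --> \oo] --> 0.
Proof.
move=> f0; apply/cvgr0Pnorm_lt => e e0.
have f_small := cvgr_lt _ f0 _ (exprn_gt0 2 e0).
near=> t; rewrite ger0_norm ?norm2_ge0 // norm2_lt_sqr ?(ltW e0) //.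
by near: t; exact: f_small.
Unshelve. all: by end_near.
Qed.

Lemma cvg_sqnorm_dist (f : nat -> vec) l :
  sqnorm (f t - l) @[t --> \oo] --> 0 -> f t @[t --> \oo] --> l.
Proof.
move=> /norm2_cvg0 fl; apply/cvgrPdist_lt => e e0.
have fl_small := cvgr_lt _ fl _ e0.
near=> t; rewrite -normrN opprB; apply: le_lt_trans (mx_norm_le_norm2 _) _.
by near: t; exact: fl_small.
Unshelve. all: by end_near.
Qed.

Lemma norm2_bounded_cluster (u : nat -> vec) (M : R) : (forall k, norm2 (u k) <= M) ->
  exists l, forall e, 0 < e -> forall N, exists2 k, (N <= k)%N & norm2 (u k - l) < e.
Proof.
move=> uM.
have u_box : (u @ \oo) [set v | forall i : 'I_m, `[- M, M]%classic (v ord0 i)].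
  exists 0%N => // k _ i /=; rewrite in_itv /= -ler_norml.
  exact: le_trans (abs_coord_le_mx_norm _ _) (le_trans (mx_norm_le_norm2 _) (uM k)).
have box_compact :=
  @rV_compact _ m (fun=> `[- M, M]%classic) (fun=> @segment_compact _ _ _).
have [l [_ l_cluster]] := box_compact (u @ \oo) _ u_box.
exists l => e e0 N.
have sm : 0 < Num.sqrt (m%:R : R) + 1 by have := sqrtr_ge0 (m%:R : R); lra.
have := l_cluster [set u k | k in [set k | (N <= k)%N]] _ _
  (nbhsx_ballx l _ (divr_gt0 e0 sm)).
case=> [|_ [[k Nk <-]]]; first by exists N => // k Nk; exists k.
rewrite -ball_normE /= -normrN opprB => ukl; exists k => //.
apply: le_lt_trans (norm2_le_mx_norm _) _.
apply: le_lt_trans (_ : _ <= (Num.sqrt m%:R + 1) * `|u k - l|) _.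
  by rewrite ler_wpM2r ?normr_ge0 // lerDl.
by rewrite mulrC -ltr_pdivlMr.
Qed.

End Euclid.

Section Projection.
Context {R : realType} {m : nat}.
Local Notation vec := 'rV[R]_m.
Implicit Types (x y z : vec) (C : set vec) (P : vec -> vec).

Lemma convex_set_segment {C z p} {l : R} : convex_set C -> 0 <= l <= 1 ->
  C z -> C p -> C (p + l *: (z - p)).
Proof.
move=> convC /andP[l0 l1] Cz Cp.
have := convC z p (Itv01 l0 l1) (mem_set Cz) (mem_set Cp).
move/set_mem; congr C.
rewrite [LHS]/conv /=; rewrite /GRing.Lmodule.sort /= /unstable.onem.
by rewrite scalerBl scale1r scalerBr addrCA addrA.
Qed.

Lemma projection_obtuse {C P} x z : is_projection C P -> convex_set C -> C z ->
  dotv (x - P x) (z - P x) <= 0.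
Proof.
move=> projP convC Cz; have [CPx Pmin] := projP x.
set p := P x in CPx Pmin *; set c := dotv (x - p) (z - p); set q := sqnorm (z - p).
rewrite leNgt; apply/negP => c_gt0.
have q0 : 0 <= q := sqnorm_ge0 _.
(* moving from [p] towards [z] by [l = c / (c + q)] would get strictly closer to [x] *)
set l := c / (c + q).
have l0 : 0 < l by rewrite divr_gt0 //; lra.
have l01 : 0 <= l <= 1 by rewrite ltW //= ler_pdivrMr ?mul1r; lra.
have lq : l * q < c by rewrite /l mulrAC ltr_pdivrMr; nra.
have := Pmin _ (convex_set_segment convC l01 Cz CPx).
rewrite norm2_le_sqr ?norm2_ge0 // sqr_norm2 opprD addrA.
by rewrite [X in _ <= X]sqnormB sqnormZ dotvZr -/c -/q; nra.
Qed.

Lemma relaxed_projection_le {C P} x z (al : R) : is_projection C P -> convex_set C ->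
  C z -> 0 <= al <= 1 ->
  sqnorm (x - al *: (x - P x) - z) <= sqnorm (x - z) - al * sqnorm (x - P x).
Proof.
move=> projP convC Cz /andP[al0 al1].
have obtuse := projection_obtuse x z projP convC Cz.
set d := x - P x in obtuse *; set w := z - P x in obtuse.
rewrite addrAC (_ : x - z = d - w); last by rewrite /d /w opprB addrA subrK.
rewrite [X in X <= _]sqnormB sqnormZ dotvZr dotvBl (dotvC w d).
have : al * dotv d w <= 0 by rewrite mulr_ge0_le0.
have : al ^+ 2 * sqnorm d <= al * sqnorm d.
  by rewrite ler_wpM2r ?sqnorm_ge0 // expr2 ler_piMr.
rewrite -/(sqnorm d); lra.
Qed.

Lemma dist_projection_le {C P} x y : is_projection C P ->
  norm2 (x - P x) <= norm2 (x - y) + norm2 (y - P y).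
Proof.
move=> projP; have [CPy _] := projP y; have [_ Pmin] := projP x.
exact: le_trans (Pmin _ CPy) (norm2_dist_le _ _ _).
Qed.

End Projection.

Section Subgradient.
Context {R : realType} {m : nat}.
Local Notation vec := 'rV[R]_m.
Implicit Types (x y z : vec).

Definition gplus (g : vec -> R) y := Num.max (g y) 0.

Lemma gplus_ge0 g y : 0 <= gplus g y.
Proof. by rewrite le_max lexx orbT. Qed.

Lemma subgradient_step_le {g G} {K : R} z y (be : R) : is_plus_subgradient_sel g G ->
  (forall y, norm2 (G y) <= K) -> g z <= 0 -> 0 <= be ->
  sqnorm (y - be *: G y - z) <= sqnorm (y - z) - 2 * be * gplus g y + be ^+ 2 * K ^+ 2.
Proof.
move=> GP GK gz be0; have [G0 Gsub] := GP y.
have K0 : 0 <= K := le_trans (norm2_ge0 _) (GK y).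
have GK2 : sqnorm (G y) <= K ^+ 2 by rewrite -norm2_le_sqr.
have [gy|gy] := leP (g y) 0.
  rewrite G0 // scaler0 subr0 /gplus (max_idPr gy); nra.
have := Gsub gy z; rewrite -opprB dotvNr (dotvC (G y)) => sub_ineq.
rewrite /gplus (max_idPl (ltW gy)) addrAC [X in X <= _]sqnormB sqnormZ dotvZr.
have : be ^+ 2 * sqnorm (G y) <= be ^+ 2 * K ^+ 2 by rewrite ler_wpM2l ?sqr_ge0.
have : be * g y <= be * dotv (y - z) (G y) by rewrite ler_wpM2l //; lra.
lra.
Qed.

Lemma gplus_lipschitz {g G} {K : R} x y : is_plus_subgradient_sel g G ->
  (forall y, norm2 (G y) <= K) -> gplus g x - gplus g y <= K * norm2 (x - y).
Proof.
move=> GP GK; have [G0 Gsub] := GP x.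
have K0 : 0 <= K := le_trans (norm2_ge0 _) (GK y).
have Kxy : 0 <= K * norm2 (x - y) by rewrite mulr_ge0 ?norm2_ge0.
have gy0 := gplus_ge0 g y; have [gx|gx] := leP (g x) 0.
  by rewrite {1}/gplus (max_idPr gx); lra.
rewrite {1}/gplus (max_idPl (ltW gx)).
have := Gsub gx y; rewrite -opprB dotvNr.
have : dotv (G x) (x - y) <= K * norm2 (x - y).
  by apply: le_trans (cauchy_schwarz _ _) _; rewrite ler_wpM2r ?norm2_ge0.
have : g y <= gplus g y by rewrite le_max lexx.
lra.
Qed.

End Subgradient.

Lemma weighted_sqdist_decomp {R : realType} {m n : nat} (w : 'I_n -> R)
    (v : 'I_n -> 'rV[R]_m) z :
  \sum_(j < n) w j = 1 ->
  \sum_(j < n) w j * sqnorm (v j - z) =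
  sqnorm (\sum_(j < n) w j *: v j - z) +
  \sum_(j < n) w j * sqnorm (v j - \sum_(k < n) w k *: v k).
Proof.
move=> w1; set vb := \sum_(k < n) w k *: v k.
have vbz : vb - z = \sum_(j < n) w j *: (v j - z).
  by under eq_bigr do rewrite scalerBr; rewrite sumrB -scaler_suml w1 scale1r.
have E j : v j - vb = (v j - z) - (vb - z) by rewrite opprB addrA subrK.
under [X in _ = _ + X]eq_bigr do rewrite E sqnormB !mulrDr mulrN.
rewrite big_split /= sumrB -mulr_suml w1 mul1r.
have -> : \sum_(j < n) w j * (2 * dotv (v j - z) (vb - z)) = 2 * sqnorm (vb - z).
  rewrite /sqnorm [X in _ = 2 * dotv X _]vbz dotv_suml mulr_sumr.
  apply: eq_bigr => j _.
  by rewrite dotvZl mulrCA.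
ring.
Qed.

Section Mixing.
Context {R : realType} {n : nat}.
Variables (a : 'I_n -> 'I_n -> R) (h : R).
Hypothesis a_sym : forall i j, a i j = a j i.
Hypothesis a_ge0 : forall i j, 0 <= a i j.
Hypothesis h_gt0 : 0 < h.
Hypothesis h_deg : forall i, h * \sum_(j < n) a i j < 1.

(* row [i] of [1 - h L], with [L] the Laplacian of the weights [a] *)
Definition mixing i j := h * a i j + (i == j)%:R * (1 - h * \sum_(k < n) a i k).

Lemma mixingC i j : mixing i j = mixing j i.
Proof. by rewrite /mixing a_sym; case: eqVneq => [->|_]; rewrite ?mul0r. Qed.

Lemma mixing_ge0 i j : 0 <= mixing i j.
Proof. by rewrite addr_ge0 ?mulr_ge0 ?ler0n ?(ltW h_gt0) // subr_ge0 ltW. Qed.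

Lemma mixing_diag_gt0 i : 0 < mixing i i.
Proof.
by rewrite /mixing eqxx mul1r ltr_wpDl ?mulr_ge0 ?(ltW h_gt0) // subr_gt0.
Qed.

Lemma mixing_adj_gt0 {i j} : adj a i j -> 0 < mixing i j.
Proof. by case/andP => /negPf ij aij; rewrite /mixing ij mul0r addr0 mulr_gt0. Qed.

Lemma sum_deltaZ (V : lmodType R) (c : 'I_n -> V) i :
  \sum_(j < n) (i == j)%:R *: c j = c i.
Proof.
rewrite (bigD1 i) //= eqxx scale1r big1 ?addr0 // => j /negPf ji.
by rewrite eq_sym ji scale0r.
Qed.

Lemma mixing_sum1 i : \sum_(j < n) mixing i j = 1.
Proof.
rewrite big_split /= -mulr_sumr.
by rewrite (sum_deltaZ R^o (fun _ => 1 - h * \sum_(k < n) a i k)) addrC subrK.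
Qed.

Section Vectors.
Context {m : nat}.
Local Notation vec := 'rV[R]_m.
Implicit Types z : 'I_n -> vec.

Lemma consensus_termE z i :
  z i + cons_term a h z i = \sum_(j < n) mixing i j *: z j.
Proof.
have -> : cons_term a h z i = h *: \sum_(j < n) a i j *: (z j - z i).
  rewrite /cons_term big_mkcond; congr (_ *: _); apply: eq_bigr => j _.
  case: ifP => // /negbT; rewrite negb_and negbK -leNgt => /orP[/eqP->|aij].
    by rewrite subrr scaler0.
  have -> : a i j = 0 by apply/le_anti; rewrite aij a_ge0.
  by rewrite scale0r.
under [RHS]eq_bigr do rewrite scalerDl -!scalerA.
rewrite big_split /= sum_deltaZ -scaler_sumr.
under [in LHS]eq_bigr do rewrite scalerBr.
by rewrite sumrB -scaler_suml scalerBr scalerBl scale1r scalerA addrCA.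
Qed.

Lemma sum_mixing (V : lmodType R) (c : 'I_n -> V) :
  \sum_(i < n) \sum_(j < n) mixing i j *: c j = \sum_(j < n) c j.
Proof.
rewrite exchange_big /=; apply: eq_bigr => j _.
by rewrite -scaler_suml (eq_bigr _ (fun i _ => mixingC i j)) mixing_sum1 scale1r.
Qed.

Definition disagreement z i :=
  \sum_(j < n) mixing i j * sqnorm (z j - \sum_(k < n) mixing i k *: z k).

Lemma disagreement_ge0 z i : 0 <= disagreement z i.
Proof. by apply: sumr_ge0 => j _; rewrite mulr_ge0 ?mixing_ge0 ?sqnorm_ge0. Qed.

Lemma mixing_sqdist_decomp z c :
  \sum_(i < n) sqnorm (\sum_(j < n) mixing i j *: z j - c) +
  \sum_(i < n) disagreement z i = \sum_(i < n) sqnorm (z i - c).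
Proof.
rewrite -big_split /=.
under eq_bigr do rewrite -weighted_sqdist_decomp ?mixing_sum1 //.
exact: (sum_mixing R^o).
Qed.

Lemma sqdist_adj_le_disagreement z i k : adj a i k ->
  sqnorm (z k - z i) <= (2 / mixing i k + 2 / mixing i i) * disagreement z i.
Proof.
move=> aik; set y := \sum_(j < n) mixing i j *: z j.
have term j : mixing i j * sqnorm (z j - y) <= disagreement z i.
  rewrite /disagreement (bigD1 j) //= lerDl.
  by apply: sumr_ge0 => l _; rewrite mulr_ge0 ?mixing_ge0 ?sqnorm_ge0.
have wk := mixing_adj_gt0 aik; have wi := mixing_diag_gt0 i.
have dk : sqnorm (z k - y) <= disagreement z i / mixing i k.
  by rewrite ler_pdivlMr // mulrC.
have di : sqnorm (y - z i) <= disagreement z i / mixing i i.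
  by rewrite sqnorm_distC ler_pdivlMr // mulrC.
rewrite (_ : z k - z i = (z k - y) + (y - z i)); last by rewrite addrA subrK.
apply: le_trans (sqnormD_le _ _) _.
have -> : (2 / mixing i k + 2 / mixing i i) * disagreement z i =
  2 * (disagreement z i / mixing i k) + 2 * (disagreement z i / mixing i i) by ring.
lra.
Qed.

End Vectors.
End Mixing.

Section NonnegSeries.
Context {R : realType} {u : nat -> R}.
Hypothesis u_ge0 : forall k, 0 <= u k.

Lemma nondecreasing_series : nondecreasing_seq (series u).
Proof. by apply/nondecreasing_seqP => k; rewrite /series /= big_nat_recr //= lerDl. Qed.

Lemma series_bounded_cvg B : (forall t, series u t <= B) -> cvgn (series u).
Proof.
move=> uB; apply: nondecreasing_is_cvgn; first exact: nondecreasing_series.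
by exists B => _ [t _ <-].
Qed.

Hypothesis u_cvg : cvgn (series u).

Lemma series_le_lim t : series u t <= limn (series u).
Proof. exact: nondecreasing_cvgn_le nondecreasing_series u_cvg t. Qed.

Lemma series_tail_le s t : \sum_(s <= k < t) u k <= limn (series u) - series u s.
Proof.
rewrite lerBrDl; have [st|ts] := leqP s t.
  by rewrite /series /= -big_cat_nat //; exact: series_le_lim.
by rewrite big_geq ?(ltnW ts) // addr0 series_le_lim.
Qed.

Lemma series_tail_lt e : 0 < e -> \forall s \near \oo, forall t, \sum_(s <= k < t) u k < e.
Proof.
move=> e0; have /cvgrPdist_lt/(_ e e0) := u_cvg; apply: filterS => s lim_s t.
exact: le_lt_trans (series_tail_le s t) (le_lt_trans (ler_norm _) lim_s).
Qed.

Lemma not_eventually_dominated (v : nat -> R) C : 0 <= C ->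
  series v @ \oo --> +oo -> ~ \forall t \near \oo, v t <= C * u t.
Proof.
move=> C0 /cvgryPge v_oo [N _ dom].
have [T _ vT] := v_oo (series v N + C * (limn (series u) - series u N) + 1).
have NT := leq_maxl N T; have := vT _ (leq_maxr N T).
have -> : series v (maxn N T) = series v N + \sum_(N <= k < maxn N T) v k.
  by rewrite /series /= (big_cat_nat (leq0n N) NT).
have : \sum_(N <= k < maxn N T) v k <= C * \sum_(N <= k < maxn N T) u k.
  rewrite mulr_sumr big_nat_cond [leRHS]big_nat_cond ler_sum // => k.
  by rewrite andbT => /andP[Nk _]; exact: dom.
have := ler_wpM2l C0 (series_tail_le N (maxn N T)); lra.
Qed.

End NonnegSeries.

Lemma cvg0_sqr_series {R : realType} (u : nat -> R) : (forall k, 0 <= u k) ->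
  cvgn (series (fun k => u k ^+ 2)) -> u t @[t --> \oo] --> 0.
Proof.
move=> u0 /cvg_series_cvg_0 u2; apply/cvgr0Pnorm_lt => e e0.
have u2e := cvgr_lt _ u2 (e ^+ 2) (exprn_gt0 2 e0).
near=> t; rewrite ger0_norm // -ltr_sqr ?nnegrE ?(ltW e0) //.
by near: t; exact: u2e.
Unshelve. all: by end_near.
Qed.

Lemma telescope_le {R : realType} {v d c : nat -> R} :
  (forall t, v t.+1 + d t <= v t + c t) -> forall s t, (s <= t)%N ->
  v t + \sum_(s <= k < t) d k <= v s + \sum_(s <= k < t) c k.
Proof.
move=> step s t /subnKC <-; elim: (t - s)%N => [|j IH].
  by rewrite addn0 !big_geq.
rewrite addnS !big_nat_recr ?leq_addr //=; have := step (s + j)%N; lra.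
Qed.

Lemma quasi_nonincreasing_cvg0 {R : realType} {v c : nat -> R} :
  (forall k, 0 <= c k) -> cvgn (series c) -> (forall t, 0 <= v t) ->
  (forall t, v t.+1 <= v t + c t) ->
  (forall e, 0 < e -> forall N, exists2 s, (N <= s)%N & v s < e) ->
  v t @[t --> \oo] --> 0.
Proof.
move=> c0 c_cvg v0 step often; apply/cvgr0Pnorm_lt => e e0.
have e2 : 0 < e / 2 by rewrite divr_gt0.
have [N _ tail] := series_tail_lt c0 c_cvg _ e2.
have [s Ns vs] := often _ e2 N.
exists s => // t st /=; rewrite ger0_norm //.
have step0 k : v k.+1 + 0 <= v k + c k by rewrite addr0.
have := telescope_le step0 _ _ st; rewrite big1_eq addr0.
have := tail s Ns t; lra.
Qed.

(* While [phi] is above [l1] the steps [be] are dominated by the summable [p],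
   and while it is below [l2] so are the steps [al]. Since [be] is not summable,
   [phi] gets below [l1] arbitrarily late; from such a time on it can rise
   only by increments whose total is less than [l2 - l1], so it stays below
   [l2], and then [al] would be summable. *)
Section Crossing.
Context {R : realType}.
Variables (phi p al be : nat -> R) (C M l1 l2 : R).
Hypothesis p_ge0 : forall k, 0 <= p k.
Hypothesis p_cvg : cvgn (series p).
Hypothesis al_ge0 : forall k, 0 <= al k.
Hypothesis be_ge0 : forall k, 0 <= be k.
Hypothesis al_cvg0 : al t @[t --> \oo] --> 0.
Hypothesis be_cvg0 : be t @[t --> \oo] --> 0.
Hypothesis al_div : series al @ \oo --> +oo.
Hypothesis be_div : series be @ \oo --> +oo.
Hypothesis l12 : l1 < l2.
Hypothesis C_ge0 : 0 <= C.
Hypothesis M_ge0 : 0 <= M.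
Hypothesis be_dom : \forall t \near \oo, l1 <= phi t -> be t <= C * p t.
Hypothesis al_dom : \forall t \near \oo, phi t <= l2 -> al t <= C * p t.
Hypothesis phi_step : forall t, phi t.+1 - phi t <= M * (al t + be t).

Let d := (l2 - l1) / 3.

Let d_gt0 : 0 < d. Proof. by rewrite divr_gt0 // subr_gt0. Qed.

Let good_eventually : \forall t \near \oo,
  [/\ l1 <= phi t -> be t <= C * p t, phi t <= l2 -> al t <= C * p t,
       M * (al t + be t) < d & forall t', 2 * C * M * \sum_(t <= k < t') p k < d].
Proof.
have CM : 0 < 2 * C * M + 1 by rewrite ltr_wpDl ?mulr_ge0.
have M1 : 0 < M + 1 by have := M_ge0; lra.
have e0 : 0 < d / (M + 1) / 2 by do 2 apply: divr_gt0 => //.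
have tail := series_tail_lt p_ge0 p_cvg _ (divr_gt0 d_gt0 CM).
have al_small := cvgr_lt _ al_cvg0 _ e0; have be_small := cvgr_lt _ be_cvg0 _ e0.
near=> t; split.
- by near: t; exact: be_dom.
- by near: t; exact: al_dom.
- have alt : al t < d / (M + 1) / 2 by near: t; exact: al_small.
  have bet : be t < d / (M + 1) / 2 by near: t; exact: be_small.
  have : (M + 1) * (al t + be t) < d.
    by rewrite mulrC -ltr_pdivlMr //; lra.
  by have := al_ge0 t; have := be_ge0 t; nra.
- have tail_t : forall t', \sum_(t <= k < t') p k < d / (2 * C * M + 1).
    by near: t; exact: tail.
  move=> t'; have := tail_t t'; rewrite ltr_pdivlMr //.
  have : 0 <= \sum_(t <= k < t') p k by rewrite sumr_ge0.
  nra.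
Unshelve. all: by end_near.
Qed.

Lemma crossing_absurd : False.
Proof.
have [N _ good] := good_eventually.
have d3 : l1 + 3 * d = l2 by rewrite /d; field.
have dpos := d_gt0; have CM : 0 <= 2 * C * M by rewrite !mulr_ge0.
have [s Ns phi_s] : exists2 s, (N <= s)%N & phi s < l1.
  apply: contrapT => above.
  apply: (not_eventually_dominated p_ge0 p_cvg be C C_ge0 be_div).
  exists N => // t Nt; have [dom_be _ _ _] := good t Nt; apply: dom_be.
  by rewrite leNgt; apply/negP => lt; apply: above; exists t.
have [_ _ _ tail] := good s Ns.
have below j : phi (s + j)%N <= l1 + d + 2 * C * M * \sum_(s <= k < s + j) p k.
  elim: j => [|j IH]; first by rewrite addn0 big_geq // mulr0 addr0; lra.
  have [dom_be dom_al step _] := good (s + j)%N (leq_trans Ns (leq_addr _ _)).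
  have le2 : phi (s + j)%N <= l2 by have := tail (s + j)%N; lra.
  have := phi_step (s + j)%N; have := p_ge0 (s + j)%N; have := tail (s + j)%N.
  rewrite addnS big_nat_recr ?leq_addr //= mulrDr.
  have : 0 <= 2 * C * M * p (s + j)%N by rewrite mulr_ge0.
  have [lt|ge] := ltP (phi (s + j)%N) l1.
    have : 0 <= 2 * C * M * \sum_(s <= k < s + j) p k by rewrite mulr_ge0 ?sumr_ge0.
    lra.
  have : M * (al (s + j)%N + be (s + j)%N) <= M * (2 * C * p (s + j)%N).
    by rewrite ler_wpM2l //; have := dom_be ge; have := dom_al le2; lra.
  lra.
apply: (not_eventually_dominated p_ge0 p_cvg al C C_ge0 al_div).
exists s => // t st; have [_ dom_al _ _] := good t (leq_trans Ns st); apply: dom_al.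
by have := below (t - s)%N; rewrite subnKC //; have := tail t; lra.
Qed.

End Crossing.

Section Algorithm.
Context {R : realType} {n m : nat}.
Local Notation vec := 'rV[R]_m.
Context {g : 'I_n -> vec -> R} {X : 'I_n -> set vec} {G P : 'I_n -> vec -> vec}.
Context {a : 'I_n -> 'I_n -> R} {K h : R} {alpha beta : nat -> R}.
Context {x : 'I_n -> nat -> vec}.
Hypothesis X_convex : forall i, convex_set (X i).
Hypothesis P_proj : forall i, is_projection (X i) (P i).
Hypothesis G_subgrad : forall i, is_plus_subgradient_sel (g i) (G i).
Hypothesis G_bound : forall i y, norm2 (G i y) <= K.
Hypothesis K_ge0 : 0 <= K.
Hypothesis a_sym : forall i j, a i j = a j i.
Hypothesis a_ge0 : forall i j, 0 <= a i j.
Hypothesis a_connected : graph_connected a.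
Hypothesis h_gt0 : 0 < h.
Hypothesis h_deg : forall i, h * \sum_(j < n) a i j < 1.
Hypothesis alpha01 : forall t, 0 <= alpha t <= 1.
Hypothesis alpha_div : series alpha @ \oo --> +oo.
Hypothesis alpha_sqr : cvgn (series (fun t => alpha t ^+ 2)).
Hypothesis beta_ge0 : forall t, 0 <= beta t.
Hypothesis beta_div : series beta @ \oo --> +oo.
Hypothesis beta_sqr : cvgn (series (fun t => beta t ^+ 2)).
Hypothesis x_step : forall i t,
  x i t.+1 = x i t + control a h G P (alpha t) (beta t) (fun j => x j t) i.

Definition feasible z := (forall i, g i z <= 0) /\ (forall i, X i z).

Context {z0 : vec}.
Hypothesis z0_feasible : feasible z0.

Definition ycons t i := \sum_(j < n) mixing a h i j *: x j t.
Definition xi t i := ycons t i - beta t *: G i (ycons t i).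
Definition resid t i := xi t i - P i (xi t i).

Definition lyap z t := \sum_(i < n) sqnorm (x i t - z).

(* what the consensus, subgradient and projection stages of agent [i] remove
   from [lyap z], for every feasible [z] *)
Definition agent_decrease t i := disagreement a h (fun j => x j t) i +
  2 * beta t * gplus (g i) (ycons t i) + alpha t * sqnorm (resid t i).
Definition decrease t := \sum_(i < n) agent_decrease t i.
Definition noise t := n%:R * K ^+ 2 * beta t ^+ 2.

Lemma alpha_ge0 t : 0 <= alpha t. Proof. by case/andP: (alpha01 t). Qed.

Lemma x_stepE t i : x i t.+1 = xi t i - alpha t *: resid t i.
Proof.
by rewrite x_step /control /= !addrA (consensus_termE a h a_ge0 (fun j => x j t)).
Qed.

Lemma agent_decrease_ge0 t i : 0 <= agent_decrease t i.
Proof.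
rewrite !addr_ge0 ?mulr_ge0 ?gplus_ge0 ?alpha_ge0 ?sqnorm_ge0 //.
exact: disagreement_ge0.
Qed.

Lemma decrease_ge0 t : 0 <= decrease t.
Proof. by apply: sumr_ge0 => i _; exact: agent_decrease_ge0. Qed.

Lemma agent_decrease_le t i : agent_decrease t i <= decrease t.
Proof.
rewrite /decrease (bigD1 i) //= lerDl.
by apply: sumr_ge0 => j _; exact: agent_decrease_ge0.
Qed.

Lemma noise_ge0 t : 0 <= noise t.
Proof. by rewrite mulr_ge0 ?sqr_ge0 ?mulr_ge0 ?ler0n ?sqr_ge0. Qed.

Lemma lyap_ge0 z t : 0 <= lyap z t.
Proof. by apply: sumr_ge0 => i _; exact: sqnorm_ge0. Qed.

Lemma lyap_step z t : feasible z -> lyap z t.+1 + decrease t <= lyap z t + noise t.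
Proof.
move=> [gz Xz].
have agent i : sqnorm (x i t.+1 - z) <= sqnorm (ycons t i - z) + beta t ^+ 2 * K ^+ 2
    - (2 * beta t * gplus (g i) (ycons t i) + alpha t * sqnorm (resid t i)).
  have := relaxed_projection_le (xi t i) z (alpha t) (P_proj i) (X_convex i) (Xz i)
    (alpha01 t).
  have := subgradient_step_le z (ycons t i) (beta t) (G_subgrad i) (G_bound i) (gz i)
    (beta_ge0 t).
  by rewrite x_stepE; lra.
rewrite /lyap -(mixing_sqdist_decomp a h a_sym (fun j => x j t) z) -/(ycons t _).
apply: le_trans (lerD (ler_sum _ (fun i _ => agent i)) (lexx _)) _.
have -> : noise t = \sum_(i < n) beta t ^+ 2 * K ^+ 2.
  by rewrite sumr_const card_ord -mulr_natl /noise mulrAC mulrA.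
by rewrite /decrease -!big_split ler_sum // => i _ /=; rewrite /agent_decrease /ycons; lra.
Qed.

Lemma noise_cvg : cvgn (series noise).
Proof.
apply: (series_bounded_cvg noise_ge0
  (n%:R * K ^+ 2 * limn (series (fun t => beta t ^+ 2)))) => t.
rewrite /series /= -mulr_sumr ler_wpM2l ?mulr_ge0 ?ler0n ?sqr_ge0 //.
exact: (series_le_lim (fun t => sqr_ge0 (beta t)) beta_sqr).
Qed.

Lemma lyap_series_le z t : feasible z ->
  lyap z t + series decrease t <= lyap z 0 + series noise t.
Proof. by move=> zf; apply: telescope_le (leq0n t) => k; exact: lyap_step. Qed.

Let lyap_max := lyap z0 0 + limn (series noise).

Lemma decrease_cvg : cvgn (series decrease).
Proof.
apply: (series_bounded_cvg decrease_ge0 lyap_max) => t.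
have := lyap_series_le z0 t z0_feasible; have := lyap_ge0 z0 t.
have := series_le_lim noise_ge0 noise_cvg t; rewrite /lyap_max; lra.
Qed.

Lemma lyap_le_max t : lyap z0 t <= lyap_max.
Proof.
have := lyap_series_le z0 t z0_feasible; have := series_le_lim noise_ge0 noise_cvg t.
have : 0 <= series decrease t by apply: sumr_ge0 => k _; exact: decrease_ge0.
rewrite /lyap_max; lra.
Qed.

Lemma disagreement_le_decrease t i : disagreement a h (fun j => x j t) i <= decrease t.
Proof.
apply: le_trans (agent_decrease_le t i); rewrite /agent_decrease -addrA lerDl.
by rewrite addr_ge0 ?mulr_ge0 ?gplus_ge0 ?alpha_ge0 ?sqnorm_ge0.
Qed.

Lemma consensus_adj i k : adj a i k -> norm2 (x k t - x i t) @[t --> \oo] --> 0.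
Proof.
move=> aik; apply: norm2_cvg0; apply/cvgr0Pnorm_lt => e e0.
set c := 2 / mixing a h i k + 2 / mixing a h i i.
have c0 : 0 < c.
  by rewrite addr_gt0 // divr_gt0 ?(mixing_adj_gt0 a h h_gt0 aik)
    ?(mixing_diag_gt0 a h a_ge0 h_gt0 h_deg).
have dec_small := cvgr_lt _ (cvg_series_cvg_0 decrease_cvg) _ (divr_gt0 e0 c0).
near=> t; rewrite ger0_norm ?sqnorm_ge0 //.
have := sqdist_adj_le_disagreement a h a_ge0 h_gt0 h_deg (fun j => x j t) i k aik.
move/le_lt_trans; apply.
apply: le_lt_trans (ler_wpM2l (ltW c0) (disagreement_le_decrease t i)) _.
rewrite mulrC -ltr_pdivlMr //; near: t; exact: dec_small.
Unshelve. all: by end_near.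
Qed.

Lemma consensus i j : norm2 (x i t - x j t) @[t --> \oo] --> 0.
Proof.
have [p ip ->] := connectP (a_connected i j); elim: p i ip => [|k p IH] i /=.
  move=> _; under eq_fun do rewrite subrr norm20; exact: cvg_cst.
case/andP=> aik kp; apply: (squeeze_cvgr (f := fun=> 0)); last first.
- have := cvgD (consensus_adj i k aik) (IH k kp); rewrite addr0; exact.
- exact: cvg_cst.
near=> t; rewrite norm2_ge0 /=.
have := norm2_dist_le (x i t) (x k t) (x (last k p) t).
by rewrite [norm2 (x i t - x k t)]norm2_distC.
Unshelve. all: by end_near.
Qed.

Hypothesis n_gt0 : (0 < n)%N.

Definition xbar t := mean (fun i => x i t).

Lemma x_xbar_small e : 0 < e -> \forall t \near \oo, forall i, norm2 (x i t - xbar t) <= e.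
Proof.
move=> e0.
have pairs :=
  filter_forall _ (fun i => filter_forall _ (fun j => cvgr_lt _ (consensus i j) _ e0)).
near=> t; have close : forall i j, norm2 (x i t - x j t) < e by near: t; exact: pairs.
move=> i; rewrite sub_meanE //; apply: mean_norm2_le => // j; exact: ltW.
Unshelve. all: by end_near.
Qed.

Lemma ycons_xbar_small e : 0 < e ->
  \forall t \near \oo, forall i, norm2 (ycons t i - xbar t) <= e.
Proof.
move=> e0; near=> t.
have x_close : forall j, norm2 (x j t - xbar t) <= e by near: t; exact: x_xbar_small.
move=> i.
have -> : ycons t i - xbar t = \sum_(j < n) mixing a h i j *: (x j t - xbar t).
  under eq_bigr do rewrite scalerBr.
  by rewrite sumrB -scaler_suml mixing_sum1 scale1r.
apply: le_trans (norm2_sum _ _ _ _) _.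
rewrite -[leRHS]mul1r -(mixing_sum1 a h i) mulr_suml ler_sum // => j _.
by rewrite norm2Z ger0_norm ?ler_wpM2l ?(mixing_ge0 a h a_ge0 h_gt0 h_deg).
Unshelve. all: by end_near.
Qed.

Lemma beta_cvg0 : beta t @[t --> \oo] --> 0.
Proof. exact: cvg0_sqr_series beta_ge0 beta_sqr. Qed.

Lemma alpha_cvg0 : alpha t @[t --> \oo] --> 0.
Proof. exact: cvg0_sqr_series alpha_ge0 alpha_sqr. Qed.

Lemma xi_xbar_small e : 0 < e ->
  \forall t \near \oo, forall i, norm2 (xi t i - xbar t) <= e.
Proof.
move=> e0; have K1 : 0 < K + 1 by have := K_ge0; lra.
have y_close := ycons_xbar_small _ (divr_gt0 e0 (ltr0n _ 2)).
have beta_small := cvgr_lt _ beta_cvg0 _ (divr_gt0 e0 (mulr_gt0 (ltr0n _ 2) K1)).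
near=> t; have : beta t < e / (2 * (K + 1)) by near: t; exact: beta_small.
rewrite ltr_pdivlMr ?mulr_gt0 // => beta_t.
have : forall i, norm2 (ycons t i - xbar t) <= e / 2 by near: t; exact: y_close.
move=> y_close_t i; rewrite /xi addrAC.
apply: le_trans (norm2D _ _) _; rewrite norm2N norm2Z ger0_norm //.
have := y_close_t i; have := G_bound i (ycons t i); have := beta_ge0 t; nra.
Unshelve. all: by end_near.
Qed.

Lemma ycons_sqdist_le t i : sqnorm (ycons t i - z0) <= lyap_max.
Proof.
apply: le_trans (lyap_le_max t).
rewrite /lyap -(mixing_sqdist_decomp a h a_sym (fun j => x j t) z0) -/(ycons t _).
rewrite (bigD1 i) //= -addrA lerDl addr_ge0 ?sumr_ge0 // => j _.
  exact: sqnorm_ge0.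
exact: disagreement_ge0.
Qed.

Let beta_sqr_sum := limn (series (fun t => beta t ^+ 2)).
Let resid_max := Num.sqrt (lyap_max + K ^+ 2 * beta_sqr_sum).

Lemma beta_sqr_le t : beta t ^+ 2 <= beta_sqr_sum.
Proof.
apply: le_trans (series_le_lim (fun t => sqr_ge0 (beta t)) beta_sqr t.+1).
by rewrite /series /= big_nat_recr //= lerDr sumr_ge0 // => k _; exact: sqr_ge0.
Qed.

Lemma resid_le t i : norm2 (resid t i) <= resid_max.
Proof.
have [gz0 Xz0] := z0_feasible.
apply: le_trans ((P_proj i (xi t i)).2 _ (Xz0 i)) _.
have := subgradient_step_le z0 (ycons t i) (beta t) (G_subgrad i) (G_bound i) (gz0 i)
  (beta_ge0 t).
have := ycons_sqdist_le t i; have := beta_sqr_le t; have := gplus_ge0 (g i) (ycons t i).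
have := sqnorm_ge0 (xi t i - z0); have := beta_ge0 t.
have : beta t ^+ 2 * K ^+ 2 <= K ^+ 2 * beta_sqr_sum.
  by rewrite mulrC ler_wpM2l ?sqr_ge0 ?beta_sqr_le.
rewrite -/(xi t i) => *.
rewrite norm2_le_sqr ?sqrtr_ge0 // sqr_sqrtr; nra.
Qed.

Lemma xbar_step_le t : norm2 (xbar t.+1 - xbar t) <= K * beta t + resid_max * alpha t.
Proof.
have -> : xbar t.+1 - xbar t =
    mean (fun i => - (beta t *: G i (ycons t i)) - alpha t *: resid t i).
  rewrite /xbar /mean -scalerBr; congr (_ *: _).
  rewrite -(sum_mixing a h a_sym _ (fun j => x j t)) -/(ycons t _) -sumrB.
  apply: eq_bigr => i _.
  by rewrite x_stepE /xi -/(ycons t i) addrAC (addrAC (ycons t i)) subrr add0r.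
apply: mean_norm2_le => // i; apply: le_trans (norm2D _ _) _.
rewrite !norm2N !norm2Z !ger0_norm ?beta_ge0 ?alpha_ge0 //.
rewrite [K * _]mulrC [resid_max * _]mulrC.
by rewrite lerD ?ler_wpM2l ?ler_wpM2r ?beta_ge0 ?alpha_ge0 ?G_bound ?resid_le.
Qed.

Definition gap_g z := \sum_(i < n) gplus (g i) z.
Definition gap_X z := \sum_(i < n) norm2 (z - P i z).

Lemma gap_g_lipschitz u v : gap_g u - gap_g v <= n%:R * K * norm2 (u - v).
Proof.
rewrite /gap_g -sumrB (_ : _ * _ = \sum_(i < n) K * norm2 (u - v)); last first.
  by rewrite sumr_const card_ord -mulrA mulr_natl.
by apply: ler_sum => i _; exact: gplus_lipschitz (G_subgrad i) (G_bound i).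
Qed.

Lemma gap_X_lipschitz u v : gap_X u - gap_X v <= n%:R * norm2 (u - v).
Proof.
rewrite /gap_X -sumrB (_ : _ * _ = \sum_(i < n) norm2 (u - v)); last first.
  by rewrite sumr_const card_ord mulr_natl.
by apply: ler_sum => i _; rewrite lerBlDr; exact: dist_projection_le (P_proj i).
Qed.

Lemma feasible_gap_le0 z : gap_g z + gap_X z <= 0 -> feasible z.
Proof.
move=> gap0.
have gz i : gplus (g i) z <= 0 /\ norm2 (z - P i z) <= 0.
  have gs : 0 <= \sum_(j < n | j != i) gplus (g j) z.
    by rewrite sumr_ge0 // => j _; exact: gplus_ge0.
  have Xs : 0 <= \sum_(j < n | j != i) norm2 (z - P j z).
    by rewrite sumr_ge0 // => j _; exact: norm2_ge0.
  move: gap0; rewrite /gap_g /gap_X (bigD1 i) //= [X in _ + X <= _](bigD1 i) //=.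
  by have := gplus_ge0 (g i) z; have := norm2_ge0 (z - P i z); lra.
split=> i; have [gi Xi] := gz i.
  by apply: le_trans gi; rewrite le_max lexx.
have : z - P i z == 0 by rewrite -norm2_eq0 eq_le Xi norm2_ge0.
by rewrite subr_eq0 => /eqP ->; exact: (P_proj i z).1.
Qed.

Lemma decrease_ge_gplus t : 2 * beta t * \sum_(i < n) gplus (g i) (ycons t i) <= decrease t.
Proof.
rewrite mulr_sumr /decrease ler_sum // => i _; rewrite /agent_decrease addrAC lerDr.
by rewrite addr_ge0 ?mulr_ge0 ?alpha_ge0 ?sqnorm_ge0 ?disagreement_ge0.
Qed.

Lemma decrease_ge_resid t i : alpha t * sqnorm (resid t i) <= decrease t.
Proof.
apply: le_trans (agent_decrease_le t i); rewrite /agent_decrease lerDr.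
by rewrite addr_ge0 ?mulr_ge0 ?gplus_ge0 ?disagreement_ge0.
Qed.

Lemma gap_g_xbar_le t eta : (forall i, norm2 (ycons t i - xbar t) <= eta) ->
  gap_g (xbar t) <= \sum_(i < n) gplus (g i) (ycons t i) + n%:R * K * eta.
Proof.
move=> y_close; rewrite -lerBlDl /gap_g -sumrB.
rewrite (_ : _ * _ = \sum_(i < n) K * eta); last first.
  by rewrite sumr_const card_ord -mulrA mulr_natl.
apply: ler_sum => i _; apply: le_trans (gplus_lipschitz _ _ (G_subgrad i) (G_bound i)) _.
by rewrite norm2_distC ler_wpM2l.
Qed.

Lemma gap_X_xbar_le t eta : (forall i, norm2 (xi t i - xbar t) <= eta) ->
  gap_X (xbar t) <= \sum_(i < n) norm2 (resid t i) + n%:R * eta.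
Proof.
move=> xi_close; rewrite -lerBlDl /gap_X -sumrB.
rewrite (_ : _ * _ = \sum_(i < n) eta); last by rewrite sumr_const card_ord mulr_natl.
apply: ler_sum => i _; rewrite lerBlDr.
apply: le_trans (dist_projection_le _ (xi t i) (P_proj i)) _.
by rewrite lerD2r norm2_distC.
Qed.

Lemma beta_dominated e : 0 < e ->
  \forall t \near \oo, e / 3 <= gap_g (xbar t) -> beta t <= 3 / e * decrease t.
Proof.
move=> e0; have nK1 : 0 < n%:R * K + 1 by have := mulr_ge0 (ler0n R n) K_ge0; lra.
set eta := e / (6 * (n%:R * K + 1)).
have eta0 : 0 < eta by rewrite divr_gt0 ?mulr_gt0.
have nK_eta : n%:R * K * eta <= e / 6.
  have -> : e / 6 = (n%:R * K + 1) * eta by rewrite /eta; field; rewrite gt_eqF.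
  by rewrite ler_wpM2r ?(ltW eta0) // lerDl.
near=> t; have : gap_g (xbar t) <= \sum_(i < n) gplus (g i) (ycons t i) + n%:R * K * eta.
  by apply: gap_g_xbar_le; near: t; exact: ycons_xbar_small.
move=> gap_le gap_ge; rewrite mulrAC ler_pdivlMr // mulrC.
by have := decrease_ge_gplus t; have := beta_ge0 t; nra.
Unshelve. all: by end_near.
Qed.

Lemma alpha_dominated e : 0 < e -> \forall t \near \oo,
  e / 3 <= gap_X (xbar t) -> alpha t <= (12 * n%:R / e) ^+ 2 * decrease t.
Proof.
move=> e0; have n0 : 0 < n%:R :> R by rewrite ltr0n.
set c := e / (12 * n%:R); have c0 : 0 < c by rewrite divr_gt0 ?mulr_gt0.
have eta0 : 0 < e / (6 * n%:R) by rewrite divr_gt0 ?mulr_gt0.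
have n_eta : n%:R * (e / (6 * n%:R)) = e / 6 by field; rewrite gt_eqF.
near=> t; have : gap_X (xbar t) <= \sum_(i < n) norm2 (resid t i) + e / 6.
  by rewrite -n_eta; apply: gap_X_xbar_le; near: t; exact: xi_xbar_small.
move=> gap_le gap_ge.
have [i resid_i] : exists i, c <= norm2 (resid t i).
  apply: contrapT => /forallNP small.
  have : \sum_(i < n) norm2 (resid t i) <= \sum_(i < n) c.
    by apply: ler_sum => i _; rewrite leNgt; apply/negP => /ltW ci; apply: (small i).
  rewrite sumr_const card_ord -mulr_natl.
  have : n%:R * c = e / 12 by rewrite /c; field; rewrite gt_eqF.
  lra.
have C0 : 0 <= (12 * n%:R / e) ^+ 2 by exact: sqr_ge0.
have Cc : (12 * n%:R / e) ^+ 2 * c ^+ 2 = 1 by rewrite /c; field; rewrite !gt_eqF.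
have : alpha t * c ^+ 2 <= decrease t.
  apply: le_trans (decrease_ge_resid t i); rewrite ler_wpM2l ?alpha_ge0 //.
  by rewrite -sqr_norm2 lerXn2r ?nnegrE ?(ltW c0) ?norm2_ge0.
move/(ler_wpM2l C0); rewrite mulrCA Cc mulr1 //.
Unshelve. all: by end_near.
Qed.

Let gap_g_rate := n%:R * K * (K + resid_max).

Lemma gap_g_xbar_step t :
  gap_g (xbar t.+1) - gap_g (xbar t) <= gap_g_rate * (alpha t + beta t).
Proof.
apply: le_trans (gap_g_lipschitz _ _) _.
have nK : 0 <= n%:R * K by rewrite mulr_ge0 ?ler0n.
apply: le_trans (ler_wpM2l nK (xbar_step_le t)) _.
rewrite /gap_g_rate -mulrA ler_wpM2l //.
have := sqrtr_ge0 (lyap_max + K ^+ 2 * beta_sqr_sum); rewrite -/resid_max.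
have := alpha_ge0 t; have := beta_ge0 t; have := K_ge0; nra.
Qed.

Lemma gap_small_often e : 0 < e ->
  forall N, exists2 t, (N <= t)%N & gap_g (xbar t) + gap_X (xbar t) < e.
Proof.
move=> e0 N; apply: contrapT => never.
have gap_ge t : (N <= t)%N -> e <= gap_g (xbar t) + gap_X (xbar t).
  by move=> Nt; rewrite leNgt; apply/negP => lt_e; apply: never; exists t.
have C0 : 0 <= 3 / e by rewrite divr_ge0 ?(ltW e0).
have C'0 : 0 <= (12 * n%:R / e) ^+ 2 by exact: sqr_ge0.
refine (crossing_absurd (fun t => gap_g (xbar t)) decrease alpha beta
  (3 / e + (12 * n%:R / e) ^+ 2) gap_g_rate (e / 3) (2 * e / 3) decrease_ge0 decrease_cvg
  alpha_ge0 beta_ge0 alpha_cvg0 beta_cvg0 alpha_div beta_div _ _ _ _ _ gap_g_xbar_step).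
- lra.
- exact: addr_ge0.
- by rewrite /gap_g_rate !mulr_ge0 ?ler0n ?addr_ge0 ?sqrtr_ge0.
- near=> t; have dom : e / 3 <= gap_g (xbar t) -> beta t <= 3 / e * decrease t.
    by near: t; exact: beta_dominated.
  move=> /dom /le_trans; apply; rewrite ler_wpM2r ?decrease_ge0 // lerDl.
  exact: sqr_ge0.
- near=> t; have dom : e / 3 <= gap_X (xbar t) ->
      alpha t <= (12 * n%:R / e) ^+ 2 * decrease t.
    by near: t; exact: alpha_dominated.
  have : e <= gap_g (xbar t) + gap_X (xbar t) by near: t; exists N.
  move=> gap_t gap_g_t; have /dom /le_trans : e / 3 <= gap_X (xbar t) by lra.
  by apply; rewrite ler_wpM2r ?decrease_ge0 // lerDr.
Unshelve. all: by end_near.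
Qed.

Lemma lyap_max_ge0 : 0 <= lyap_max.
Proof. exact: le_trans (lyap_ge0 z0 0) (lyap_le_max 0). Qed.

Lemma xbar_bounded t : norm2 (xbar t) <= Num.sqrt lyap_max + norm2 z0.
Proof.
have := norm2_dist_le (xbar t) z0 0; rewrite !subr0 => /le_trans; apply.
rewrite lerD2r norm2_distC sub_meanE //; apply: mean_norm2_le => // i.
rewrite norm2_le_sqr ?sqrtr_ge0 // sqr_sqrtr ?lyap_max_ge0 // sqnorm_distC.
apply: le_trans (lyap_le_max t); rewrite /lyap (bigD1 i) //= lerDl.
by apply: sumr_ge0 => j _; exact: sqnorm_ge0.
Qed.

Lemma gap_lipschitz u v :
  gap_g u + gap_X u - (gap_g v + gap_X v) <= (n%:R * K + n%:R) * norm2 (u - v).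
Proof.
have := gap_g_lipschitz u v; have := gap_X_lipschitz u v; rewrite mulrDl; lra.
Qed.

Lemma feasible_cluster : exists2 xs, feasible xs &
  forall e, 0 < e -> forall N, exists2 t, (N <= t)%N & norm2 (xbar t - xs) < e.
Proof.
have /choice[T T_gap] : forall k, exists t, (k <= t)%N /\
    gap_g (xbar t) + gap_X (xbar t) < harmonic k.
  move=> k; have [t kt gap_t] := gap_small_often _ (harmonic_gt0 k) k.
  by exists t.
have [xs xs_cluster] :=
  norm2_bounded_cluster (fun k => xbar (T k)) _ (fun k => xbar_bounded (T k)).
exists xs; last first.
  move=> e e0 N; have [k Nk close] := xs_cluster e e0 N.
  by exists (T k) => //; apply: leq_trans Nk (proj1 (T_gap k)).
apply: feasible_gap_le0; rewrite leNgt; apply/negP => gap_pos.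
set A := gap_g xs + gap_X xs in gap_pos.
set L := n%:R * K + n%:R; have L0 : 0 <= L by rewrite addr_ge0 ?mulr_ge0 ?ler0n.
have [K0 _ harm_small] := cvgr_lt _ (@cvg_harmonic R) _ (divr_gt0 gap_pos (ltr0n R 2)).
have e0 : 0 < A / (2 * (L + 1)) by rewrite divr_gt0 ?mulr_gt0 //; lra.
have [k K0k close] := xs_cluster _ e0 K0.
have := gap_lipschitz xs (xbar (T k)); rewrite norm2_distC -/A -/L.
have := harm_small k K0k; have := proj2 (T_gap k).
have : L * norm2 (xbar (T k) - xs) <= A / 2.
  have -> : A / 2 = (L + 1) * (A / (2 * (L + 1))) by field; rewrite gt_eqF //; lra.
  by rewrite ler_pM ?norm2_ge0 ?lerDl // ltW.
clearbody A L; lra.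
Qed.

Lemma lyap_small_often xs :
  (forall e, 0 < e -> forall N, exists2 t, (N <= t)%N & norm2 (xbar t - xs) < e) ->
  forall e, 0 < e -> forall N, exists2 s, (N <= s)%N & lyap xs s < e.
Proof.
move=> xs_cluster e e0 N.
have n4 : 0 < 4 * n%:R + 1 :> R by rewrite ltr_wpDl ?mulr_ge0 ?ler0n.
set d := Num.sqrt (e / (4 * n%:R + 1)).
have d0 : 0 < d by rewrite sqrtr_gt0 divr_gt0.
have [N' _ x_close] := x_xbar_small _ d0.
have [s Ns xbar_close] := xs_cluster d d0 (maxn N N').
exists s; first exact: leq_trans (leq_maxl N N') Ns.
have x_close_s := x_close s (leq_trans (leq_maxr N N') Ns).
apply: le_lt_trans (_ : _ <= \sum_(i < n) 4 * d ^+ 2) _.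
  apply: ler_sum => i _; rewrite -(subrK (xbar s) (x i s)) -addrA.
  apply: le_trans (sqnormD_le _ _) _; rewrite -!sqr_norm2.
  have := x_close_s i; have := ltW xbar_close.
  have := norm2_ge0 (x i s - xbar s); have := norm2_ge0 (xbar s - xs); nra.
rewrite sumr_const card_ord -[_ *+ n]mulr_natl /d.
rewrite sqr_sqrtr ?divr_ge0 ?(ltW e0) ?(ltW n4) //.
have -> : n%:R * (4 * (e / (4 * n%:R + 1))) = e - e / (4 * n%:R + 1).
  by field; rewrite gt_eqF.
by rewrite ltrBlDr ltrDl divr_gt0.
Qed.

Lemma x_cvg_feasible : exists2 xs, feasible xs & forall i, x i t @[t --> \oo] --> xs.
Proof.
have [xs xs_feasible xs_cluster] := feasible_cluster.
exists xs => // i; apply: cvg_sqnorm_dist.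
have step t : lyap xs t.+1 <= lyap xs t + noise t.
  by have := lyap_step xs t xs_feasible; have := decrease_ge0 t; lra.
have lyap0 := quasi_nonincreasing_cvg0 noise_ge0 noise_cvg (lyap_ge0 xs) step
  (lyap_small_often xs xs_cluster).
apply: (squeeze_cvgr _ (cvg_cst 0) lyap0); near=> t.
rewrite sqnorm_ge0 /lyap (bigD1 i) //= lerDl.
by apply: sumr_ge0 => j _; exact: sqnorm_ge0.
Unshelve. all: by end_near.
Qed.

End Algorithm.

Theorem corollary3 (R : realType) (n m : nat)
  (g : 'I_n -> 'rV[R]_m -> R) (X : 'I_n -> set 'rV[R]_m)
  (G : 'I_n -> 'rV[R]_m -> 'rV[R]_m) (P : 'I_n -> 'rV[R]_m -> 'rV[R]_m)
  (a : 'I_n -> 'I_n -> R) (K h : R) (alpha beta : nat -> R)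
  (x : 'I_n -> nat -> 'rV[R]_m) :
  (forall i, convex_fun (g i)) ->
  (forall i, continuous (g i)) ->
  (forall i, closed (X i)) ->
  (forall i, convex_set (X i)) ->
  (forall i, is_projection (X i) (P i)) ->
  (forall i, is_plus_subgradient_sel (g i) (G i)) ->
  (forall i j, a i j = a j i) ->
  (forall i j, 0 <= a i j) ->
  (forall i, a i i = 0) ->
  graph_connected a ->
  (exists z, (forall i, g i z <= 0) /\ (forall i, X i z)) ->
  0 <= K ->
  (forall i y, norm2 (G i y) <= K) ->
  (forall t, 0 <= alpha t <= 1) ->
  (\sum_(0 <= k < t) alpha k @[t --> \oo] --> +oo) ->
  cvg (\sum_(0 <= k < t) alpha k ^+ 2 @[t --> \oo]) ->
  (forall t, 0 <= beta t) ->
  (\sum_(0 <= k < t) beta k @[t --> \oo] --> +oo) ->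
  cvg (\sum_(0 <= k < t) beta k ^+ 2 @[t --> \oo]) ->
  0 < h ->
  (forall i, h * (\sum_(j < n) a i j) < 1) ->
  (forall i t, x i t.+1 =
     x i t + control a h G P (alpha t) (beta t) (fun j => x j t) i) ->
  (forall i j, norm2 (x i t - x j t) @[t --> \oo] --> 0) /\
  exists xs, ((forall i, g i xs <= 0) /\ (forall i, X i xs)) /\
    forall i, x i t @[t --> \oo] --> xs.
Proof.
move=> _ _ _ X_convex P_proj G_subgrad a_sym a_ge0 _ a_conn [z0 z0_feasible] K_ge0
  G_bound alpha01 alpha_div alpha_sqr beta_ge0 beta_div beta_sqr h_gt0 h_deg x_step.
split=> [i j|]; first exact: (consensus X_convex P_proj G_subgrad G_bound K_ge0 a_sym
  a_ge0 a_conn h_gt0 h_deg alpha01 beta_ge0 beta_sqr x_step z0_feasible).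
have [n0|n_gt0] := posnP n.
  by exists z0; split => // i; have := ltn_ord i; rewrite [in X in (_ < X)%N]n0.
have [xs xs_feasible x_cvg] := x_cvg_feasible X_convex P_proj G_subgrad G_bound K_ge0
  a_sym a_ge0 a_conn h_gt0 h_deg alpha01 alpha_div alpha_sqr beta_ge0 beta_div beta_sqr
  x_step z0_feasible n_gt0.
by exists xs.
Qed.
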